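(* Let $T$ be a coherent LCMM tree, $\boldsymbol\theta=\boldsymbol\theta(T)$, $\boldsymbol\eta=\boldsymbol\eta(T)$, and let $\boldsymbol\mu=\tilde{\boldsymbol p}(\boldsymbol\theta+\mathbf A\boldsymbol\eta)$ be the current LCMM price vector. Let $\alpha\in\Omega$ and $I=[\alpha,1)$. Consider the following procedure (Algorithm 3). Initialize $z\gets\mathit{root}$, $\mu_z\gets1$, $\mathit{price}\gets0$. While $\alpha_z\ne\alpha$ and $z$ is not a leaf of $T$: let $z_l=\mathrm{left}(z)$, $z_r=\mathrm{right}(z)$, $k=\mathrm{level}(z_l)$; compute $e_l=\exp\{(\theta_{z_l}+B_k\eta_{z_l})/b_k\}$, $e_r=\exp\{(\theta_{z_r}+B_k\eta_{z_r})/b_k\}$, $\mu_{z_l}\gets\frac{e_l}{e_l+e_r}\mu_z$, $\mu_{z_r}\gets\frac{e_r}{e_l+e_r}\mu_z$; if $\alpha<\alpha_{z_r}$ set $z\gets z_l$ and $\mathit{price}\gets\mathit{price}+\mu_{z_r}$, else set $z\gets z_r$. Return $\mathit{price}+\frac{\beta_z-\alpha}{\beta_z-\alpha_z}\mu_z$. Then every value $\mu_{z}$ computed equals the corresponding coordinate of $\boldsymbol\mu$, the procedure returns the LCMM price of the bundle security for $I$, namely $\sum_{u\in\mathcal Z_K:\ I_u\subseteq I}\mu_u$, and it runs in time $\mathcal O(\mathrm{prec}(\alpha))$ (arithmetic operations counted as unit cost), where $\mathrm{prec}(\alpha)$ is the smallest integer $k\ge0$ such that $\alpha$ is an integer multiple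 of $2^{-k}$.
   Context: Fix an integer $K\ge1$, $N=2^K$, $\Omega=\{j/N:j=0,\dots,N-1\}$. Let $T^*$ be the complete binary tree of depth $K$ whose nodes are intervals: the root (level $0$) has $I_{\mathit{root}}=[0,1)$, and each node $z$ at level $k<K$ with $I_z=[\alpha_z,\beta_z)$ has children $\mathrm{left}(z)$, $\mathrm{right}(z)$ at level $k+1$ with intervals $[\alpha_z,\frac{\alpha_z+\beta_z}2)$ and $[\frac{\alpha_z+\beta_z}2,\beta_z)$. Let $\mathcal Z^*$ be its node set, $\mathcal Z_k$ the nodes at level $k$, $\mathrm{level}(z)$ the level of $z$, and $\mathcal Y^*=\mathcal Z^*\setminus\mathcal Z_K$. Fix liquidity parameters $b_k>0$ ($k=0,\dots,K$) and set $B_\ell=\sum_{k=\ell+1}^K b_k$ for $\ell=-1,\dots,K$. For $\tilde{\boldsymbol\theta}\in\mathbb R^{\mathcal Z^*}$ the direct-sum price vector is $\tilde p_z(\tilde{\boldsymbol\theta})=e^{\tilde\theta_z/b_k}/\sum_{z'\in\mathcal Z_k}e^{\tilde\theta_{z'}/b_k}$ for $z\in\mathcal Z_k$ (the gradient of $\tilde C(\tilde{\boldsymbol\theta})=\sum_k b_k\log\sum_{z\in\mathcal Z_k}e^{\tilde\theta_z/b_k}$). The constraint matrix $\mathbf A\in\mathbb R^{\mathcal Z^*\times\mathcal Y^*}$ has entries $A_{zy}=B_{\mathrm{level}(z)}$ if $z=y$, $-b_{\mathrm{level}(z)}$ if $I_z\subsetneq I_y$, and $0$ otherwise. An LCMM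 tree $T$ is a subtree of $T^*$ containing the root in which each node has either zero or two children in $T$, each node $z$ annotated with reals $\theta_z$ and $\eta_z$ (with $\eta_z$ treated as $0$ if $z\in\mathcal Z_K$). It represents $\boldsymbol\theta(T)\in\mathbb R^{\mathcal Z^*}$ and $\boldsymbol\eta(T)\in\mathbb R^{\mathcal Y^*}$ whose coordinates equal the annotations for nodes in $T$ and are $0$ for nodes not in $T$. $T$ is coherent if $\mathbf A^\top\tilde{\boldsymbol p}(\boldsymbol\theta(T)+\mathbf A\boldsymbol\eta(T))=\mathbf 0$; in that case $\boldsymbol\eta(T)$ minimizes $\boldsymbol\eta\mapsto\tilde C(\boldsymbol\theta(T)+\mathbf A\boldsymbol\eta)$ and the LCMM price vector is $\tilde{\boldsymbol p}(\boldsymbol\theta(T)+\mathbf A\boldsymbol\eta(T))$. *)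

From HB Require Import structures.
From mathcomp Require Import all_boot all_order all_algebra.
From mathcomp Require Import reals.
From mathcomp.analysis Require Import sequences exp.
Set Implicit Arguments. Unset Strict Implicit. Unset Printing Implicit Defensive.
Import Order.TTheory GRing.Theory Num.Theory.
Local Open Scope ring_scope.

(* A node of the complete binary tree T^* is a pair (level k, index j),
   with interval I_z = [j/2^k, (j+1)/2^k). *)
Definition node := (nat * nat)%type.
Definition level (z : node) : nat := z.1.
Definition idx (z : node) : nat := z.2.
Definition root : node := (0%N, 0%N).
Definition left (z : node) : node := (z.1.+1, (z.2).*2).
Definition right (z : node) : node := (z.1.+1, (z.2).*2.+1).
Definition parent (z : node) : node := (z.1.-1, (z.2)./2).

Definition valid (K : nat) (z : node) : bool := (z.1 <= K)%N && (z.2 < 2 ^ z.1)%N.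

Section Defs.
Variable R : realType.

Definition nalpha (z : node) : R := (z.2)%:R / 2%:R ^+ z.1.
Definition nbeta (z : node) : R := (z.2.+1)%:R / 2%:R ^+ z.1.

(* sum over Z^* = all nodes of levels 0..K, and over Y^* = levels 0..K-1 *)
Definition sumZ (K : nat) (F : node -> R) : R :=
  \sum_(k < K.+1) \sum_(j < 2 ^ k) F (k : nat, j : nat).
Definition sumY (K : nat) (F : node -> R) : R :=
  \sum_(k < K) \sum_(j < 2 ^ k) F (k : nat, j : nat).

Definition Bsum (K : nat) (b : nat -> R) (l : nat) : R :=
  \sum_(l.+1 <= k < K.+1) b k.

Definition strict_sub (z y : node) : bool :=
  [&& nalpha y <= nalpha z, nbeta z <= nbeta y & z != y].

Definition Amat (K : nat) (b : nat -> R) (z y : node) : R :=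
  if z == y then Bsum K b (level z)
  else if strict_sub z y then - b (level z) else 0.

Definition Amul (K : nat) (b : nat -> R) (eta : node -> R) (z : node) : R :=
  sumY K (fun y => Amat K b z y * eta y).

Definition ptilde (b : nat -> R) (x : node -> R) (z : node) : R :=
  expR (x z / b (level z)) /
  \sum_(j < 2 ^ level z) expR (x (level z, j : nat) / b (level z)).

(* LCMM tree given as a boolean membership predicate on nodes *)
Definition is_LCMM_tree (K : nat) (inT : node -> bool) : Prop :=
  [/\ inT root,
      forall z, inT z -> valid K z,
      forall z, inT z -> z != root -> inT (parent z) &
      forall z, inT z -> inT (left z) = inT (right z)].

Definition thetaT (inT : node -> bool) (theta : node -> R) (z : node) : R :=
  if inT z then theta z else 0.
Definition etaT (K : nat) (inT : node -> bool) (eta : node -> R) (y : node) : R :=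
  if inT y && (level y < K)%N then eta y else 0.

Definition lcmm_arg K b inT theta eta (z : node) : R :=
  thetaT inT theta z + Amul K b (etaT K inT eta) z.

Definition coherent K b inT theta eta : Prop :=
  forall y : node, valid K y -> (level y < K)%N ->
    sumZ K (fun z => Amat K b z y * ptilde b (lcmm_arg K b inT theta eta) z) = 0.

Definition lcmm_price K b inT theta eta : node -> R :=
  ptilde b (lcmm_arg K b inT theta eta).

Definition bundle_price K (mu : node -> R) (alpha : R) : R :=
  \sum_(j < 2 ^ K | (alpha <= nalpha (K, j : nat)) && (nbeta (K, j : nat) <= 1)) mu (K, j : nat).

(* State of Algorithm 3: current node z, mu_z, price, list of all
   computed pairs (node, computed mu value), number of loop iterations. *)
Record alg_state := AlgState {
  st_z : node; st_mu : R; st_price : R; st_log : seq (node * R); st_iter : nat }.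

(* The while loop of Algorithm 3, run with fuel (K iterations always suffice
   since each iteration increases the level of z and leaves of T have level <= K). *)
Fixpoint alg_loop K (b : nat -> R) (inT : node -> bool) (theta eta : node -> R)
    (alpha : R) (fuel : nat) (s : alg_state) : alg_state :=
  match fuel with
  | 0%N => s
  | f.+1 =>
    let z := st_z s in
    if (nalpha z != alpha) && inT (left z) then
      let zl := left z in let zr := right z in let k := level zl in
      let el := expR ((thetaT inT theta zl + Bsum K b k * etaT K inT eta zl) / b k) in
      let er := expR ((thetaT inT theta zr + Bsum K b k * etaT K inT eta zr) / b k) in
      let mul := el / (el + er) * st_mu s in
      let mur := er / (el + er) * st_mu s in
      let log' := st_log s ++ [:: (zl, mul); (zr, mur)] in
      if alpha < nalpha zr then
        alg_loop K b inT theta eta alpha f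
          (AlgState zl mul (st_price s + mur) log' (st_iter s).+1)
      else
        alg_loop K b inT theta eta alpha f
          (AlgState zr mur (st_price s) log' (st_iter s).+1)
    else s
  end.

Definition alg_init : alg_state := AlgState root 1 0 [:: (root, 1)] 0%N.

Definition alg_final K b inT theta eta (alpha : R) : alg_state :=
  alg_loop K b inT theta eta alpha K alg_init.

Definition alg_output K b inT theta eta (alpha : R) : R :=
  let s := alg_final K b inT theta eta alpha in
  st_price s + (nbeta (st_z s) - alpha) / (nbeta (st_z s) - nalpha (st_z s)) * st_mu s.

Definition dyadic_at (a : R) (k : nat) : Prop :=
  exists m : int, a = m%:~R / 2%:R ^+ k.
Definition is_prec (a : R) (p : nat) : Prop :=
  dyadic_at a p /\ forall k : nat, (k < p)%N -> ~ dyadic_at a k.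

End Defs.

From Pilot Require Import Defs.
From HB Require Import structures.
From mathcomp Require Import all_boot all_order all_algebra.
From mathcomp Require Import reals.
From mathcomp.analysis Require Import sequences exp.
From mathcomp Require Import zify ring.
Set Implicit Arguments.
Unset Strict Implicit.
Unset Printing Implicit Defensive.
Import Order.TTheory GRing.Theory Num.Theory.
Local Open Scope ring_scope.

(* Nodes are pairs (level l, index c) with I_(l,c) = [c/2^l, (c+1)/2^l); the
   level-k descendants of (l, c) are the (k, j) with j %/ 2^(k-l) = c.
   - Dyadic bookkeeping: comparisons of endpoints are comparisons of naturals, and
     strict containment I_z < I_y means that y is a proper ancestor of z.
   - Coherence is consistency: column y of A^T mu equals
     B_l mu_y - sum_(k > l) b_k D_k(y), D_k(y) the weight of the level-k
     descendants of y; by induction from the leaves D_k(y) = mu_y for all k.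
   - Local form of prices: the argument of the price map at z is the local term
     theta_z + B_k eta_z plus an off-diagonal part shared by siblings, so the two
     children split their parent's price by a two-term softmax.
   - Below a node without children in T all leaves of T^* have the same price,
     hence carry mu_z / 2^(K - level z) each.
   - The loop keeps the invariant: alpha lies in I_z, every computed value is the
     true price, price is the weight of the leaves right of I_z, and the number of
     iterations, level z, never exceeds prec alpha.  At exit the leaves of z from
     alpha on carry the returned linear fraction of mu_z. *)

(* A number [a] lies in the block [c*P, (c+1)*P) iff its quotient by [P] is [c];
   with [P = 2^(k-l)] this says that leaf (k, a) lies below node (l, c). *)
Lemma mul_range_divn P a c :
  (0 < P)%N -> (c * P <= a < c.+1 * P)%N = (a %/ P == c)%N.
Proof.
move=> P_gt0; rewrite -leq_divRL // -ltn_divLR //.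
by apply/idP/eqP => [/andP[? ?]|->]; [lia | rewrite leqnn ltnSn].
Qed.

(* The level-[K] descendants of a node [(l, c)] of [T^*] are leaves of [T^*]. *)
Lemma desc_range_bound l c K :
  (c < 2 ^ l)%N -> (l <= K)%N -> (c.+1 * 2 ^ (K - l) <= 2 ^ K)%N.
Proof.
by move=> lt_c le_lK; rewrite -[in X in (_ <= X)%N](subnKC le_lK) expnD leq_mul2r lt_c orbT.
Qed.

Lemma sum_ord_single (V : nmodType) n (F : nat -> V) i :
  (forall j, j != i -> F j = 0) -> \sum_(j < n) F j = if (i < n)%N then F i else 0.
Proof.
move=> F0; case: ltnP => [lt_in | le_ni].
  rewrite (bigD1 (Ordinal lt_in)) //= big1 ?addr0 // => j ne_ji.
  by apply: F0; apply: contraNneq ne_ji => eq_ji; apply/eqP/val_inj.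
by rewrite big1 // => j _; apply: F0; rewrite neq_ltn (leq_trans (ltn_ord j) le_ni).
Qed.

Lemma sum_ord_interval (V : nmodType) n a c (F : nat -> V) : (c <= n)%N ->
  \sum_(j < n) (if (a <= j < c)%N then F j else 0) = \sum_(a <= j < c) F j.
Proof.
move=> le_cn; rewrite -(big_mkord xpredT (fun j => if (a <= j < c)%N then F j else 0)).
case: (leqP a c) => [le_ac | lt_ca]; last first.
  rewrite [RHS]big_geq ?(ltnW lt_ca) // big1 // => j _.
  by case: ifP => // /andP[? ?]; lia.
rewrite (big_cat_nat _ (n := a)) ?(leq_trans le_ac) //=.
rewrite [X in _ + X](big_cat_nat _ (n := c)) //=.
have below : \sum_(0 <= j < a) (if (a <= j < c)%N then F j else 0) = 0.
  by rewrite big_nat_cond big1 // => j /andP[/andP[_ lt_ja] _]; rewrite leqNgt lt_ja.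
have above : \sum_(c <= j < n) (if (a <= j < c)%N then F j else 0) = 0.
  by rewrite big_nat_cond big1 // => j /andP[/andP[le_cj _] _]; rewrite ltnNge le_cj andbF.
rewrite below above add0r addr0.
by apply: eq_big_nat => j ->.
Qed.

Section DyadicBookkeeping.
Variable R : realType.

Lemma pow2_gt0 k : (0 : R) < 2%:R ^+ k.
Proof. by rewrite exprn_gt0. Qed.

Lemma pow2_split l K : (l <= K)%N -> (2%:R ^+ K : R) = 2%:R ^+ l * (2 ^ (K - l))%:R.
Proof. by move=> le_lK; rewrite natrX -exprD subnKC. Qed.

Lemma dyadic_le a k c l :
  ((a%:R / 2%:R ^+ k : R) <= c%:R / 2%:R ^+ l) = (a * 2 ^ l <= c * 2 ^ k)%N.
Proof.
rewrite ler_pdivrMr ?pow2_gt0 // mulrAC ler_pdivlMr ?pow2_gt0 //.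
by rewrite -!natrX -!natrM ler_nat.
Qed.

Lemma dyadic_lt a k c l :
  ((a%:R / 2%:R ^+ k : R) < c%:R / 2%:R ^+ l) = (a * 2 ^ l < c * 2 ^ k)%N.
Proof.
rewrite ltr_pdivrMr ?pow2_gt0 // mulrAC ltr_pdivlMr ?pow2_gt0 //.
by rewrite -!natrX -!natrM ltr_nat.
Qed.

Lemma strict_subE k a m c :
  strict_sub R (k, a) (m, c) = (m < k)%N && (a %/ 2 ^ (k - m) == c)%N.
Proof.
rewrite /strict_sub /nalpha /nbeta /= !dyadic_le.
case: (ltnP m k) => [lt_mk | le_km].
  have pow_kE : (2 ^ k = 2 ^ (k - m) * 2 ^ m)%N by rewrite -expnD subnK // ltnW.
  have -> : ((k, a) != (m, c)) = true by apply/eqP => -[? _]; lia.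
  by rewrite andbT -mul_range_divn ?expn_gt0 // pow_kE !mulnA !leq_pmul2r ?expn_gt0.
apply/negbTE/and3P => -[le_ac le_cb neq].
have pow_mE : (2 ^ m = 2 ^ (m - k) * 2 ^ k)%N by rewrite -expnD subnK.
rewrite pow_mE !mulnA !leq_pmul2r ?expn_gt0 // in le_ac le_cb.
case: (eqVneq m k) => [eq_mk | ne_mk].
  subst m; rewrite subnn expn0 !muln1 in le_ac le_cb.
  have eq_ac : a = c by lia.
  by rewrite eq_ac eqxx in neq.
have : (2 <= 2 ^ (m - k))%N.
  by rewrite -{1}(expn1 2) leq_exp2l // subn_gt0 ltn_neqAle eq_sym ne_mk le_km.
lia.
Qed.

Lemma bundle_priceE K (mu : node -> R) j0 :
  bundle_price K mu (j0%:R / 2%:R ^+ K) = \sum_(j0 <= j < 2 ^ K) mu (K, j).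
Proof.
rewrite /bundle_price big_mkcond /= -(sum_ord_interval _ _ (leqnn (2 ^ K))).
apply: eq_bigr => j _; congr (if _ then _ else _).
rewrite /nalpha /nbeta /= dyadic_le leq_pmul2r ?expn_gt0 // ltn_ord andbT.
by rewrite ler_pdivrMr ?pow2_gt0 // mul1r -natrX ler_nat ltn_ord andbT.
Qed.

Lemma dyadic_node_start K j0 l : (l <= K)%N -> dyadic_at (j0%:R / 2%:R ^+ K : R) l ->
  nalpha R (l, j0 %/ 2 ^ (K - l))%N = j0%:R / 2%:R ^+ K.
Proof.
move=> le_lK [m alphaE].
have pow_l_neq0 : (2%:R ^+ l : R) != 0 by rewrite gt_eqF ?pow2_gt0.
have P_neq0 : ((2 ^ (K - l))%:R : R) != 0 by rewrite pnatr_eq0 expn_eq0.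
have j0E : (j0%:R : R) = m%:~R * (2 ^ (K - l))%:R.
  move: alphaE; rewrite (pow2_split le_lK) => /(congr1 (fun r => r * (2%:R ^+ l * (2 ^ (K - l))%:R))).
  by rewrite divfK ?mulf_neq0 // => ->; field.
rewrite /nalpha /= alphaE; congr (_ / _).
case: m j0E {alphaE} => n j0E.
  by move/eqP: j0E; rewrite -natrM eqr_nat => /eqP ->; rewrite mulnK ?expn_gt0.
have : (Negz n)%:~R * (2 ^ (K - l))%:R < 0 :> R by rewrite pmulr_llt0 ?ltr0n ?expn_gt0 // ltrz0.
by rewrite -j0E ltNge ler0n.
Qed.

End DyadicBookkeeping.

Definition desc_sum (R : realType) (mu : node -> R) (k : nat) (y : node) : R :=
  \sum_((y.2 * 2 ^ (k - y.1))%N <= j < (y.2.+1 * 2 ^ (k - y.1))%N) mu (k, j).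

Section DescendantSums.
Variables (R : realType) (mu : node -> R).

Lemma desc_sum_self y : desc_sum mu y.1 y = mu y.
Proof. by rewrite /desc_sum subnn expn0 !muln1 big_nat1; case: y. Qed.

Lemma desc_sum_split k y : (y.1 < k)%N ->
  desc_sum mu k y = desc_sum mu k (left y) + desc_sum mu k (right y).
Proof.
case: y => l c /= lt_lk; rewrite /desc_sum /left /right /=.
rewrite (_ : 2 ^ (k - l) = 2 * 2 ^ (k - l.+1))%N; last by rewrite -expnS subnSK.
set e := (2 ^ (k - l.+1))%N; have e_gt0 : (0 < e)%N by rewrite expn_gt0.
have le_mid : (c * (2 * e) <= c.*2.+1 * e)%N by clearbody e; lia.
have le_end : (c.*2.+1 * e <= c.+1 * (2 * e))%N by clearbody e; lia.
rewrite (@big_cat_nat _ _ _ (c.*2.+1 * e)%N _ _ _ _ le_mid le_end) /=.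
have -> : (c * (2 * e) = c.*2 * e)%N by clearbody e; lia.
by have -> : (c.+1 * (2 * e) = c.*2.+2 * e)%N by clearbody e; lia.
Qed.

End DescendantSums.

Lemma valid_left K z : valid K z -> (z.1 < K)%N -> valid K (left z).
Proof.
case: z => l c /andP[/= _ lt_c] lt_lK; rewrite /valid /= lt_lK expnS.
by move: lt_c; move: (2 ^ l)%N => p; lia.
Qed.

Lemma valid_right K z : valid K z -> (z.1 < K)%N -> valid K (right z).
Proof.
case: z => l c /andP[/= _ lt_c] lt_lK; rewrite /valid /= lt_lK expnS.
by move: lt_c; move: (2 ^ l)%N => p; lia.
Qed.

Section ColumnSums.
Variables (R : realType) (K : nat) (b : nat -> R) (mu : node -> R).

Lemma Amat_column_level y k : (y.2 < 2 ^ y.1)%N ->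
  \sum_(j < 2 ^ k) Amat K b (k, j : nat) y * mu (k, j : nat) =
  if k == y.1 then Bsum K b y.1 * mu y
  else if (y.1 < k)%N then - b k * desc_sum mu k y else 0.
Proof.
case: y => l c /= lt_c.
case: (ltngtP k l) => [lt_kl | lt_lk | ->].
- rewrite big1 // => j _; rewrite /Amat ifF ?strict_subE; last by apply/eqP => -[]; lia.
  by rewrite ltnNge (ltnW lt_kl) mul0r.
- have le_end := desc_range_bound lt_c (ltnW lt_lk).
  rewrite /desc_sum /= mulr_sumr -(sum_ord_interval _ _ le_end).
  apply: eq_bigr => j _; rewrite /Amat ifF ?strict_subE; last by apply/eqP => -[]; lia.
  by rewrite lt_lk -mul_range_divn ?expn_gt0 //=; case: ifP; rewrite ?mul0r.
- rewrite (@sum_ord_single _ _ (fun j => Amat K b (l, j) (l, c) * mu (l, j)) c) ?lt_c ?eqxx.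
    by rewrite /Amat eqxx.
  move=> j ne_jc; rewrite /Amat strict_subE ltnn /= ifF ?mul0r //.
  by apply/eqP => -[eq_jc]; rewrite eq_jc eqxx in ne_jc.
Qed.

Lemma Amat_column y : valid K y ->
  sumZ K (fun z => Amat K b z y * mu z) =
  Bsum K b y.1 * mu y - \sum_(y.1.+1 <= k < K.+1) b k * desc_sum mu k y.
Proof.
case/andP=> le_lK lt_c; rewrite /sumZ.
under eq_bigr => k _ do rewrite Amat_column_level //.
rewrite -(big_mkord xpredT (fun k => if k == y.1 then Bsum K b y.1 * mu y
  else if (y.1 < k)%N then - b k * desc_sum mu k y else 0)).
rewrite (@big_cat_nat _ _ _ y.1.+1) //= big_nat_recr //= eqxx.
rewrite big_nat_cond big1 ?add0r => [|k /andP[/andP[_ lt_k] _]]; last first.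
  by rewrite (ltn_eqF lt_k) ltnNge (ltnW lt_k).
rewrite -sumrN; congr (_ + _).
by apply: eq_big_nat => k /andP[lt_lk _]; rewrite gtn_eqF // lt_lk mulNr.
Qed.

Hypothesis b_pos : forall k : nat, (k <= K)%N -> 0 < b k.

Lemma Bsum_gt0 l : (l < K)%N -> 0 < Bsum K b l.
Proof.
move=> lt_lK; rewrite /Bsum big_ltn ?ltnS // ltr_wpDr ?b_pos //.
by rewrite big_nat_cond sumr_ge0 // => k /andP[/andP[_ ?] _]; apply/ltW/b_pos; lia.
Qed.

(* Induction on the height [K - level y]: the children are
   consistent, so column [y] reads [(B_l) (mu_y - mu_left - mu_right) = 0]. *)
Lemma coherent_consistent :
  (forall y, valid K y -> (y.1 < K)%N -> sumZ K (fun z => Amat K b z y * mu z) = 0) ->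
  forall y, valid K y -> forall k, (y.1 <= k <= K)%N -> desc_sum mu k y = mu y.
Proof.
move=> coh y y_valid k.
have [d] : exists d, (y.1 + d = K)%N by exists (K - y.1)%N; case/andP: y_valid => ? _; lia.
elim: d y y_valid k => [|d IH] y y_valid k height /andP[le_lk le_kK].
  by rewrite (_ : k = y.1) ?desc_sum_self //; lia.
have lt_lK : (y.1 < K)%N by lia.
have children k' : (y.1 < k' <= K)%N ->
    desc_sum mu k' y = mu (left y) + mu (right y).
  move=> /andP[lt_lk' le_k'K]; rewrite desc_sum_split //.
  by rewrite !IH ?valid_left ?valid_right //=; lia.
have mu_y : mu y = mu (left y) + mu (right y).
  move: (coh y y_valid lt_lK); rewrite Amat_column //.
  rewrite (eq_big_nat _ _ (F2 := fun k => b k * (mu (left y) + mu (right y)))); last first.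
    by move=> k' /andP[? ?]; rewrite children //; lia.
  rewrite -mulr_suml -/(Bsum K b y.1) -mulrBr => /eqP.
  by rewrite mulf_eq0 gt_eqF ?Bsum_gt0 //= subr_eq0 => /eqP.
have [-> | ne_ky] := eqVneq k y.1; first exact: desc_sum_self.
by rewrite children ?mu_y //; lia.
Qed.

End ColumnSums.

Lemma sumY_add (R : realType) K (F G : node -> R) :
  sumY K (fun y => F y + G y) = sumY K F + sumY K G.
Proof. by rewrite /sumY -big_split; apply: eq_bigr => k _; rewrite -big_split. Qed.

Lemma sumY_single (R : realType) K (F : node -> R) z : valid K z ->
  (forall y, y != z -> F y = 0) -> sumY K F = if (z.1 < K)%N then F z else 0.
Proof.
case: z => l c /andP[/= _ lt_c] F0; rewrite /sumY.
rewrite (@sum_ord_single _ _ (fun k => \sum_(j < 2 ^ k) F (k, j : nat)) l) => [|k ne_kl].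
  rewrite (@sum_ord_single _ _ (fun j => F (l, j)) c) ?lt_c // => j ne_jc.
  by apply: F0; apply: contra_neq ne_jc => -[].
by rewrite big1 // => j _; apply: F0; apply: contra_neq ne_kl => -[].
Qed.

(* [A = diag(B_level) + offdiag]; the off-diagonal entries are [-b_level(z)] when
   [I_z] is strictly inside [I_y]. *)
Definition offdiag_entry (R : realType) (b : nat -> R) (z y : node) : R :=
  if z == y then 0 else if strict_sub R z y then - b (level z) else 0.

Definition offdiag (R : realType) K (b : nat -> R) (x : node -> R) (z : node) : R :=
  sumY K (fun y => offdiag_entry b z y * x y).

(* Both children of [(l, c)] have the same ancestor [e >= 1] levels up. *)
Lemma half_divn_pow2 c e : (0 < e)%N -> (c.*2 %/ 2 ^ e = c.*2.+1 %/ 2 ^ e)%N.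
Proof.
move=> e_gt0; rewrite -(prednK e_gt0) expnS !divnMA; congr (_ %/ _)%N.
by rewrite -!muln2 mulnK // -addn1 divnMDl // divn_small // addn0.
Qed.

(* Siblings have the same proper ancestors, hence the same off-diagonal part. *)
Lemma offdiag_siblings (R : realType) K (b : nat -> R) (x : node -> R) z :
  offdiag K b x (left z) = offdiag K b x (right z).
Proof.
rewrite /offdiag /sumY; apply: eq_bigr => k _; apply: eq_bigr => i _; congr (_ * _).
case: z => l c; rewrite /offdiag_entry /left /right /level /= !strict_subE.
case: (ltnP k l.+1) => [lt_k | _]; last by case: ifP; case: ifP.
have ne x' : ((l.+1, x') == (k : nat, i : nat)) = false.
  by apply/negbTE; rewrite xpair_eqE negb_and neq_ltn lt_k orbT.
by rewrite !ne half_divn_pow2 // subn_gt0.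
Qed.

Section LCMMPrices.
Variables (R : realType) (K : nat) (b : nat -> R) (inT : node -> bool).
Variables (theta eta : node -> R).

Local Notation eta_T := (etaT K inT eta).
Local Notation arg := (lcmm_arg K b inT theta eta).
Local Notation mu := (lcmm_price K b inT theta eta).

Lemma lcmm_arg_decomp z : valid K z ->
  arg z = thetaT inT theta z + Bsum K b (level z) * eta_T z + offdiag K b eta_T z.
Proof.
move=> z_valid; rewrite /lcmm_arg /Amul -addrA; congr (_ + _).
have split_entry y : Amat K b z y * eta_T y =
    (if y == z then Bsum K b (level z) * eta_T y else 0) + offdiag_entry b z y * eta_T y.
  by rewrite /Amat /offdiag_entry eq_sym; case: eqP => [->|_]; rewrite ?mul0r ?add0r ?addr0.
transitivity (sumY K (fun y => if y == z then Bsum K b (level z) * eta_T y else 0)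
              + offdiag K b eta_T z).
  by rewrite -sumY_add /sumY; apply: eq_bigr => k _; apply: eq_bigr => j _.
rewrite (sumY_single z_valid) ?eqxx => [|y /negbTE -> //]; congr (_ + _).
by case: ltnP => // le_Kl; rewrite /etaT /level ltnNge le_Kl andbF mulr0.
Qed.

Lemma sibling_prices z : valid K (left z) -> valid K (right z) ->
  let k := level (left z) in
  let el := expR ((thetaT inT theta (left z) + Bsum K b k * eta_T (left z)) / b k) in
  let er := expR ((thetaT inT theta (right z) + Bsum K b k * eta_T (right z)) / b k) in
  mu (left z) = el / (el + er) * (mu (left z) + mu (right z)) /\
  mu (right z) = er / (el + er) * (mu (left z) + mu (right z)).
Proof.
move=> left_valid right_valid k el er.
set shared := expR (offdiag K b eta_T (left z) / b k) /
  \sum_(j < 2 ^ k) expR (arg (k, j : nat) / b k).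
have mu_left : mu (left z) = el * shared.
  by rewrite /lcmm_price /ptilde lcmm_arg_decomp // mulrDl expRD mulrA.
have mu_right : mu (right z) = er * shared.
  by rewrite /lcmm_price /ptilde lcmm_arg_decomp // mulrDl expRD mulrA offdiag_siblings.
have el_er_neq0 : el + er != 0 by rewrite gt_eqF // addr_gt0 // expR_gt0.
by rewrite mu_left mu_right -mulrDl !mulrA !divfK.
Qed.

Hypothesis tree : is_LCMM_tree K inT.

(* If a proper descendant [w] of [z] lies in [T], so does [left z]: [T] is closed
   under parents, and siblings lie in [T] together. *)
Lemma descendant_in_tree n w z :
  w.1 = (z.1 + n.+1)%N -> (w.2 %/ 2 ^ n.+1)%N = z.2 -> inT w -> inT (left z).
Proof.
have [_ _ parent_in sibling_in] := tree.
elim: n w z => [|n IH] [w1 w2] [l c] /= w_level w_below w_in.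
  rewrite expn1 divn2 in w_below.
  have z_in : inT (l, c).
    have w_nonroot : (w1, w2) != Defs.root by apply/eqP => -[]; lia.
    by have := parent_in _ w_in w_nonroot; rewrite /parent /= w_level w_below addn1.
  have w2E : w2 = (odd w2 + c.*2)%N by rewrite -w_below odd_double_half.
  move: w_in; rewrite w_level w2E addn1; case: (odd w2) => /= w_in.
    by rewrite sibling_in //; rewrite add1n in w_in.
  by rewrite add0n in w_in.
have w_nonroot : (w1, w2) != Defs.root by apply/eqP => -[]; lia.
apply: (IH (parent (w1, w2)) (l, c)); rewrite /parent /=.
- by rewrite w_level addnS.
- by rewrite -divn2 -divnMA -expnS.
- exact: parent_in w_in w_nonroot.
Qed.

Lemma leaf_tree_ancestors z j m d :
  valid K z -> ~~ inT (left z) -> (j %/ 2 ^ (K - z.1))%N = z.2 ->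
  (m < K)%N -> inT (m, d) ->
  ((j %/ 2 ^ (K - m))%N == d) = (m <= z.1)%N && ((z.2 %/ 2 ^ (z.1 - m))%N == d).
Proof.
case: z => l c /andP[/= le_lK _] no_left j_below lt_mK md_in /=.
case: (leqP m l) => [le_ml | lt_lm] /=.
  by rewrite -j_below -divnMA -expnD; congr (_ %/ 2 ^ _ == d)%N; lia.
apply/negbTE/eqP => j_below_md; move/negP: no_left; apply.
apply: (@descendant_in_tree (m - l).-1 (m, d) (l, c)) => //=; first lia.
rewrite -j_below_md -divnMA -expnD -j_below; congr (_ %/ 2 ^ _)%N; lia.
Qed.

(* Below a node without children in [T], all leaves of [T^*] have the same
   argument, hence the same price: they are not in [T] and share their
   [T]-ancestors. *)
Lemma leaf_prices_equal z a1 a2 :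
  valid K z -> ~~ inT (left z) -> (a1 < 2 ^ K)%N -> (a2 < 2 ^ K)%N ->
  (a1 %/ 2 ^ (K - z.1))%N = z.2 -> (a2 %/ 2 ^ (K - z.1))%N = z.2 ->
  mu (K, a1) = mu (K, a2).
Proof.
move=> z_valid no_left lt_a1 lt_a2 a1_below a2_below.
have le_lK : (z.1 <= K)%N by case/andP: z_valid.
have [z_leaf | lt_lK] := eqVneq z.1 K.
  by move: a1_below a2_below; rewrite z_leaf subnn expn0 !divn1 => -> ->.
have not_in a : (a %/ 2 ^ (K - z.1))%N = z.2 -> ~~ inT (K, a).
  move=> a_below; apply: contra no_left => a_in.
  apply: (@descendant_in_tree (K - z.1).-1 (K, a) z) => //=; first lia.
  by rewrite (_ : (K - z.1).-1.+1 = K - z.1)%N //; lia.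
suff eq_arg : arg (K, a1) = arg (K, a2) by rewrite /lcmm_price /ptilde eq_arg.
rewrite !lcmm_arg_decomp /valid ?leqnn ?lt_a1 ?lt_a2 //.
rewrite /thetaT (negbTE (not_in _ a1_below)) (negbTE (not_in _ a2_below)).
rewrite /etaT /level /= ltnn !andbF !mulr0; congr (_ + _).
rewrite /offdiag /sumY; apply: eq_bigr => k _; apply: eq_bigr => i _.
case i_in : (inT (k : nat, i : nat)); last by rewrite /= !mulr0.
congr (_ * _); rewrite /offdiag_entry !strict_subE /level /=.
have ne a : ((K, a) == (k : nat, i : nat)) = false.
  by apply/negbTE; rewrite xpair_eqE negb_and neq_ltn ltn_ord orbT.
rewrite !ne ltn_ord /=.
by rewrite !(leaf_tree_ancestors z_valid no_left _ (ltn_ord k) i_in).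
Qed.

Hypothesis b_pos : forall k : nat, (k <= K)%N -> 0 < b k.
Hypothesis coh : coherent K b inT theta eta.

Lemma lcmm_consistent y k : valid K y -> (y.1 <= k <= K)%N -> desc_sum mu k y = mu y.
Proof.
move=> y_valid k_range.
by apply: (coherent_consistent b_pos _ y_valid k_range) => y' y'_valid lt_y'K; exact: coh.
Qed.

Lemma leaf_price z a : valid K z -> ~~ inT (left z) ->
  (a %/ 2 ^ (K - z.1))%N = z.2 -> mu (K, a) = mu z / (2 ^ (K - z.1))%:R.
Proof.
move=> z_valid no_left a_below.
have P_gt0 : (0 < 2 ^ (K - z.1))%N by rewrite expn_gt0.
have [le_lK lt_c] := andP z_valid.
have le_end := desc_range_bound lt_c le_lK.
have a_range : (z.2 * 2 ^ (K - z.1) <= a < z.2.+1 * 2 ^ (K - z.1))%N.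
  by rewrite mul_range_divn // a_below.
have lt_aK : (a < 2 ^ K)%N by case/andP: a_range => _ /leq_trans; apply.
rewrite -(@lcmm_consistent z K) ?le_lK ?leqnn // /desc_sum.
rewrite (eq_big_nat _ _ (F2 := fun _ => mu (K, a))) => [|j /andP[? ?]]; last first.
  apply: (leaf_prices_equal z_valid no_left) => //; first lia.
  by apply/eqP; rewrite -mul_range_divn //; apply/andP.
rewrite sumr_const_nat -mulnBl subSnn mul1n -[X in _ = X / _]mulr_natr mulfK //.
by rewrite pnatr_eq0 -lt0n.
Qed.

Lemma mu_children z : valid K z -> (z.1 < K)%N -> mu z = mu (left z) + mu (right z).
Proof.
move=> z_valid lt_lK.
rewrite -(@lcmm_consistent z z.1.+1) ?leqnSn ?lt_lK // desc_sum_split //.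
by congr (_ + _); apply: desc_sum_self.
Qed.

Lemma right_leaves_split l c : valid K (l, c) -> (l < K)%N ->
  \sum_((c.*2.+1 * 2 ^ (K - l.+1))%N <= j < 2 ^ K) mu (K, j) =
  mu (right (l, c)) + \sum_((c.+1 * 2 ^ (K - l))%N <= j < 2 ^ K) mu (K, j).
Proof.
move=> z_valid lt_lK; have /andP[/= le_lK lt_c] := z_valid.
set E := (2 ^ (K - l.+1))%N.
have end_right : (c.*2.+2 * E = c.+1 * 2 ^ (K - l))%N.
  by rewrite -(subnSK lt_lK) expnS -/E; clearbody E; lia.
have le_mid : (c.*2.+1 * E <= c.*2.+2 * E)%N by rewrite leq_pmul2r ?expn_gt0.
have le_end : (c.*2.+2 * E <= 2 ^ K)%N by rewrite end_right desc_range_bound.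
rewrite (@big_cat_nat _ _ _ (c.*2.+2 * E)%N _ _ _ _ le_mid le_end) /= end_right.
rewrite -(@lcmm_consistent (right (l, c)) K) ?valid_right ?lt_lK ?leqnn //.
by rewrite /desc_sum /= -/E end_right.
Qed.

Variable j0 : nat.
Hypothesis lt_j0 : (j0 < 2 ^ K)%N.

Local Notation alpha := (j0%:R / 2%:R ^+ K : R).
Local Notation loop := (alg_loop K b inT theta eta alpha).

Definition loop_continues (s : alg_state R) : bool :=
  (nalpha R (st_z s) != alpha) && inT (left (st_z s)).

Definition loop_step (s : alg_state R) : alg_state R :=
  let z := st_z s in let zl := left z in let zr := right z in let k := level zl in
  let el := expR ((thetaT inT theta zl + Bsum K b k * eta_T zl) / b k) in
  let er := expR ((thetaT inT theta zr + Bsum K b k * eta_T zr) / b k) in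
  let mul := el / (el + er) * st_mu s in
  let mur := er / (el + er) * st_mu s in
  let log' := st_log s ++ [:: (zl, mul); (zr, mur)] in
  if alpha < nalpha R zr then AlgState zl mul (st_price s + mur) log' (st_iter s).+1
  else AlgState zr mur (st_price s) log' (st_iter s).+1.

Lemma loop_unfold f s :
  loop f.+1 s = if loop_continues s then loop f (loop_step s) else s.
Proof. by rewrite /= /loop_step /loop_continues; case: ifP => // _; case: ifP. Qed.

Definition loop_invariant (s : alg_state R) : Prop :=
  let z := st_z s in
  [/\ valid K z, st_iter s = z.1, (forall zv, zv \in st_log s -> zv.2 = mu zv.1),
      st_mu s = mu z &
      [/\ (j0 %/ 2 ^ (K - z.1))%N = z.2,
          st_price s = \sum_((z.2.+1 * 2 ^ (K - z.1))%N <= j < 2 ^ K) mu (K, j) &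
          forall p, is_prec alpha p -> (z.1 <= p)%N]].

Lemma loop_invariant_init : loop_invariant (alg_init R).
Proof.
have mu_root : mu Defs.root = 1.
  rewrite /lcmm_price /ptilde /level /=.
  rewrite -(big_mkord xpredT (fun j => expR (arg (0%N, j) / b 0%N))) expn0 big_nat1.
  by rewrite divff // gt_eqF // expR_gt0.
split => //=; first by move=> zv; rewrite inE => /eqP ->.
by split => //; rewrite subn0 ?divn_small ?mul1n ?big_geq.
Qed.

(* The stored
   child values are the true prices by [sibling_prices]; [alpha] lies in the
   chosen child; going left adds the right child's weight to [price]; and the
   level stays below [prec alpha] since the loop stops at a node starting at
   [alpha] ([dyadic_node_start]). *)
Lemma loop_step_invariant s : loop_invariant s -> loop_continues s ->
  loop_invariant (loop_step s) /\ (st_z (loop_step s)).1 = (st_z s).1.+1.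
Proof.
case: s => [[l c] m pr lg it] [/= z_valid iter_lvl log_ok mu_ok [alpha_in price_ok prec_ok]].
case/andP => /= z_ne_alpha left_in.
have [_ in_valid _ _] := tree.
have left_valid := in_valid _ left_in.
have lt_lK : (l < K)%N by case/andP: left_valid.
have right_valid := valid_right z_valid lt_lK.
have [mu_left mu_right] := sibling_prices left_valid right_valid.
set E := (2 ^ (K - l.+1))%N; have E_gt0 : (0 < E)%N by rewrite expn_gt0.
have PE : (2 ^ (K - l) = 2 * E)%N by rewrite -expnS subnSK.
have j0_range : (c * (2 * E) <= j0 < c.+1 * (2 * E))%N.
  by rewrite -PE mul_range_divn ?expn_gt0 // alpha_in.
have go_left : (alpha < nalpha R (right (l, c))) = (j0 < c.*2.+1 * E)%N.
  have KE : (2 ^ K = 2 ^ l.+1 * E)%N by rewrite -expnD subnKC.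
  by rewrite /nalpha /= dyadic_lt KE mulnCA [X in (X < _)%N]mulnC ltn_pmul2l ?expn_gt0.
have end_right : (c.*2.+2 * E = c.+1 * 2 ^ (K - l))%N by rewrite PE; clearbody E; lia.
have prec_gt p : is_prec alpha p -> (l < p)%N.
  move=> p_prec; rewrite ltn_neqAle prec_ok // andbT.
  apply: contra_neq z_ne_alpha => eq_lp; subst p.
  by rewrite -alpha_in (dyadic_node_start (ltnW lt_lK) (proj1 p_prec)).
have log_step zv : zv \in lg ++ [:: (left (l, c), mu (left (l, c)));
    (right (l, c), mu (right (l, c)))] -> zv.2 = mu zv.1.
  by rewrite mem_cat !inE => /orP[/log_ok // | /orP[] /eqP ->].
rewrite /loop_step /= mu_ok mu_children // -mu_left -mu_right go_left.
have child_block d : (d * E <= j0 < d.+1 * E)%N -> (j0 %/ 2 ^ (K - l.+1))%N = d.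
  by move=> j0_in; apply/eqP; rewrite -mul_range_divn.
case: ifP => [lt_j0_mid | ge_j0_mid]; split => //; split => //=; rewrite ?iter_lvl //.
- split => //; first by apply: child_block; clearbody E; lia.
  by rewrite price_ok right_leaves_split // addrC.
- split => //; first by apply: child_block; clearbody E; lia.
  by rewrite price_ok end_right.
Qed.

(* Starting at level [l] with fuel [K - l], the loop ends in a state satisfying
   the invariant in which the guard fails (a continuing state has a child in [T],
   so its level is below [K]). *)
Lemma loop_run f s : loop_invariant s -> ((st_z s).1 + f)%N = K ->
  loop_invariant (loop f s) /\ ~~ loop_continues (loop f s).
Proof.
elim: f s => [|f IH] s s_inv s_fuel.
  split => //; apply/negP => /andP[_ left_in].
  have [_ in_valid _ _] := tree.
  by case/andP: (in_valid _ left_in) => /= lt_lK _; lia.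
rewrite loop_unfold; case: ifP => [continues | /negbT //].
have [step_inv step_level] := loop_step_invariant s_inv continues.
by apply: IH step_inv _; rewrite step_level addSnnS.
Qed.

Lemma alg_final_invariant :
  loop_invariant (alg_final K b inT theta eta alpha) /\
  ~~ loop_continues (alg_final K b inT theta eta alpha).
Proof. exact: loop_run loop_invariant_init _. Qed.

(* At exit, the leaves of [z] from [alpha] onwards carry the fraction
   [(beta_z - alpha) / (beta_z - alpha_z)] of [mu_z]: either [alpha = alpha_z]
   and they are all the leaves below [z], or [z] has no children in [T] and
   the price of [z] is spread uniformly over its leaves ([leaf_price]). *)
Lemma exit_fraction z : valid K z -> (j0 %/ 2 ^ (K - z.1))%N = z.2 ->
  ~~ ((nalpha R z != alpha) && inT (left z)) ->
  (nbeta R z - alpha) / (nbeta R z - nalpha R z) * mu z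
  = \sum_(j0 <= j < (z.2.+1 * 2 ^ (K - z.1))%N) mu (K, j).
Proof.
case: z => l c z_valid /= alpha_in.
have P_gt0 : (0 < 2 ^ (K - l))%N by rewrite expn_gt0.
have /andP[/= le_lK lt_c] := z_valid.
have j0_range : (c * 2 ^ (K - l) <= j0 < c.+1 * 2 ^ (K - l))%N.
  by rewrite mul_range_divn // alpha_in.
have width_neq0 : nbeta R (l, c) - nalpha R (l, c) != 0.
  by rewrite subr_eq0 gt_eqF // /nalpha /nbeta /= dyadic_lt ltn_pmul2r ?expn_gt0.
rewrite negb_and negbK => /orP[/eqP z_start | no_left].
  have j0E : j0 = (c * 2 ^ (K - l))%N.
    move: z_start; rewrite /nalpha /= => /eqP; rewrite eq_le !dyadic_le.
    rewrite (_ : 2 ^ K = 2 ^ (K - l) * 2 ^ l)%N ?mulnA ?leq_pmul2r ?expn_gt0 -?expnD ?subnK //.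
    by move=> /andP[? ?]; apply/eqP; rewrite eqn_leq; apply/andP.
  rewrite -z_start divff // mul1r j0E.
  by rewrite -(@lcmm_consistent (l, c) K) ?le_lK ?leqnn.
rewrite (eq_big_nat _ _ (F2 := fun _ => mu (l, c) / (2 ^ (K - l))%:R)) => [|j /andP[? ?]].
  rewrite sumr_const_nat -[mu (l, c) / _ *+ _]mulr_natl natrB; last by case/andP: j0_range => _ /ltnW.
  rewrite /nbeta /nalpha /= (pow2_split R le_lK) natrM -natr1.
  have pow_l_neq0 : (2%:R ^+ l : R) != 0 by rewrite gt_eqF ?pow2_gt0.
  have P_neq0 : ((2 ^ (K - l))%:R : R) != 0 by rewrite pnatr_eq0 -lt0n.
  by field; rewrite pow_l_neq0 P_neq0 addrAC subrr add0r oner_neq0.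
apply: (leaf_price z_valid no_left) => /=.
by apply/eqP; rewrite -mul_range_divn //; apply/andP; split; lia.
Qed.

Lemma alg_output_correct :
  alg_output K b inT theta eta alpha = bundle_price K mu alpha.
Proof.
have [[z_valid _ _ mu_ok [alpha_in price_ok _]] stopped] := alg_final_invariant.
rewrite /alg_output bundle_priceE mu_ok price_ok addrC exit_fraction //.
move: z_valid alpha_in; case: (st_z _) => l c /andP[/= le_lK lt_c] alpha_in.
have /andP[_ /ltnW le_j0_end] : (c * 2 ^ (K - l) <= j0 < c.+1 * 2 ^ (K - l))%N.
  by rewrite mul_range_divn ?expn_gt0 // alpha_in.
by rewrite -big_cat_nat // desc_range_bound.
Qed.

End LCMMPrices.

Theorem theorem5 :
  exists C : nat,
  forall (R : realType) (K : nat) (b : nat -> R) (inT : node -> bool)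
         (theta eta : node -> R) (j0 : nat),
    (1 <= K)%N ->
    (forall k : nat, (k <= K)%N -> 0 < b k) ->
    is_LCMM_tree K inT ->
    coherent K b inT theta eta ->
    (j0 < 2 ^ K)%N ->
    let alpha : R := j0%:R / 2%:R ^+ K in
    let mu := lcmm_price K b inT theta eta in
    let s := alg_final K b inT theta eta alpha in
    [/\ (forall zv, zv \in st_log s -> zv.2 = mu zv.1),
        alg_output K b inT theta eta alpha = bundle_price K mu alpha &
        forall p : nat, is_prec alpha p -> (st_iter s <= C * p.+1)%N].
Proof.
exists 1%N => R K b inT theta eta j0 _ b_pos tree coh lt_j0 alpha mu s.
have [[_ iter_level log_ok _ [_ _ level_le_prec]] _] :=
  alg_final_invariant tree b_pos coh lt_j0.
split => //; first exact: alg_output_correct.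
by move=> p p_prec; rewrite mul1n iter_level ltnW // ltnS level_le_prec.
Qed.
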